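(* Let $X$ be a set and let $((a_{i,j})_{j\geq 1})_{i\geq 1}\in (X^{\mathbb{N}})^{\mathbb{N}}$ be a countable family of sequences in $X$. Let $(b_n)_{n\geq 1}\in X^{\mathbb{N}}$ be the output of the sequence interleaving algorithm applied to this family. Then $(b_n)$ is eventually periodic if and only if at least one of the input sequences $(a_{i,j})_{j\geq 1}$ is eventually periodic.
   Context: A finite tuple $A=(a_1,\ldots,a_n)$ is called finite-periodic with period $k$ if $k<n$, $a_{i+k}=a_i$ for $i=1,\ldots,n-k$, and $k$ is minimal with this property (for every $h<k$ there is some $i\le n-h$ with $a_i\neq a_{i+h}$); then $(a_1,\ldots,a_k)$ is called the finite-fundamental string of $A$. Let $(i_k)_{k\geq 1}=(1,2,1,2,3,1,2,3,4,1,2,3,4,5,\ldots)$; explicitly, with $T_n=n(n+1)/2$, for $T_n\le k<T_{n+1}$ one has $i_k=k-T_n+1$. The sequence interleaving algorithm produces the output as the concatenation $B_1+B_2+\cdots$ of blocks, where block $B_l$ has length $2^l$, as follows: (1) Start with $k=l=1$ and a Boolean flag $P=$ false. (2) Form $B_l$ by removing the first $2^l$ not-yet-used terms of the sequence $(a_{i_k,j})_j$ (terms used in a block are never used in a later block; each block taken from a sequence starts at its first unused term). (3) If $P=$ false: if $B_l$ is finite-periodic, set $P=$ true and let $S$ be the finite-fundamental string of $B_l$; otherwise increment $k$ by $1$. If $P=$ true: $S$ is the finite-fundamental string of some concatenation $B_h+\cdots+B_{l-1}$ with $h<l$ (the blocks produced since $P$ last became true); check whether $B_h+\cdots+B_l$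 is finite-periodic with finite-fundamental string $S$; if not, set $P=$ false and increment $k$ by $1$. (4) Increment $l$ by $1$ and return to step (2). A sequence $(c_n)$ is eventually periodic if there exist $r\ge 0$ and $m\ge 1$ with $c_{n+m}=c_n$ for all $n>r$. *)

From mathcomp Require Import all_boot.
From Stdlib Require Import ClassicalEpsilon.
Set Implicit Arguments. Unset Strict Implicit. Unset Printing Implicit Defensive.

Definition decP (P : Prop) : bool :=
  if excluded_middle_informative P then true else false.

Section Interleave.
Variable X : Type.

(* p is a period of s : 0 < p < |s| and s_i = s_{i+p} whenever i+p < |s|
   (0-based indices; [onth] avoids default elements). *)
Definition is_period (s : seq X) (p : nat) : Prop :=
  (0 < p < size s)%N /\ forall i, (i + p < size s)%N -> onth s i = onth s (i + p).

Definition finite_periodic (s : seq X) : Prop := exists p, is_period s p.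

Definition min_period (s : seq X) : nat :=
  find (fun p => decP (is_period s p)) (iota 0 (size s)).

Definition fund_string (s : seq X) : seq X := take (min_period s) s.

(* ---------- the index sequence (i_k) = 1,2,1,2,3,1,2,3,4,... ---------- *)
Definition tri (n : nat) : nat := (n * n.+1) %/ 2.

Definition troot (k : nat) : nat :=
  (fix f m := match m with
              | 0 => 0
              | m'.+1 => if (tri m <= k)%N then m else f m'
              end) k.

Definition iseq (k : nat) : nat := k - tri (troot k) + 1.

(* The family ((a_{i,j})_{j>=1})_{i>=1} is represented 0-based:
   a_{i,j} = a (i-1) (j-1). *)
Variable a : nat -> nat -> X.

Record state := State {
  st_k : nat;
  st_P : bool;
  st_S : seq X;
  st_acc : seq X;          (* B_h ++ ... ++ B_{l-1} since P last became true *)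
  st_pos : nat -> nat      (* number of used terms of each (0-based) sequence *)
}.

Definition init_state : state := State 1 false [::] [::] (fun _ => 0).

(* 0-based index of the sequence used in the current state *)
Definition cur_seq (st : state) : nat := (iseq (st_k st)).-1.

Definition block (l : nat) (st : state) : seq X :=
  mkseq (fun j => a (cur_seq st) (st_pos st (cur_seq st) + j)) (2 ^ l).

Definition step (l : nat) (st : state) : state :=
  let i := cur_seq st in
  let B := block l st in
  let pos' := fun m => if m == i then st_pos st i + 2 ^ l else st_pos st m in
  if ~~ st_P st then
    if decP (finite_periodic B)
    then State (st_k st) true (fund_string B) B pos'
    else State (st_k st).+1 false (st_S st) (st_acc st) pos'
  else
    let C := st_acc st ++ B in
    if decP (finite_periodic C /\ fund_string C = st_S st)
    then State (st_k st) true (st_S st) C pos'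
    else State (st_k st).+1 false (st_S st) (st_acc st) pos'.

(* state_before n = state just before forming block B_{n+1} *)
Fixpoint state_before (n : nat) : state :=
  match n with
  | 0 => init_state
  | n'.+1 => step n (state_before n')
  end.

Definition B (l : nat) : seq X := block l (state_before l.-1).

(* output b = B_1 ++ B_2 ++ ... (0-based): position n lies in block
   l = floor(log2 (n+2)), at offset n + 2 - 2^l *)
Definition interleave_output (n : nat) : X :=
  let l := trunc_log 2 (n + 2) in
  let st := state_before l.-1 in
  a (cur_seq st) (st_pos st (cur_seq st) + (n + 2 - 2 ^ l)).

End Interleave.

Definition eventually_periodic (X : Type) (c : nat -> X) : Prop :=
  exists r m : nat, (0 < m)%N /\ forall n, (r < n)%N -> c (n + m) = c n.

(* If the flag P is down at stage T and stays up from block B_(T+1) on, then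
   k never changes again, so the output from B_(T+1) on is a tail of a single
   input sequence.  Moreover every accumulation B_(T+1) ++ ... ++ B_l has the
   finite-fundamental string of B_(T+1), hence the same minimal period p, so
   the output from B_(T+1) on has period p.

   The key fact is a lock-in property.  Suppose the flag is down at stage T
   and the terms about to be read form a word with a period m <= T.  Then
   B_(T+1) is finite-periodic, its minimal period p is a period of the whole
   word (p + m is at most the length of B_(T+1)), and every later
   accumulation is a prefix of that word with minimal period p again.  So the
   flag never drops again.

   If the output is eventually periodic, lock-in applies at every late stage,
   so the flag stays up from some stage on and the current input sequence is
   eventually periodic.  Conversely, let a_i be eventually periodic.  If the
   flag dropped infinitely often, k would take every value, so sequence i
   would be picked up again at a late stage, at a late position, with the flag
   down, and lock-in would keep it up forever.  So the flag drops only finitely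
   often, and the first paragraph applies to its last drop. *)

From mathcomp Require Import all_boot zify.
From Stdlib Require Import ClassicalEpsilon.

Set Implicit Arguments. Unset Strict Implicit. Unset Printing Implicit Defensive.

Lemma decPP (P : Prop) : reflect P (decP P).
Proof. by rewrite /decP; case: excluded_middle_informative => h; constructor. Qed.

Section Periods.
Variable X : Type.
Implicit Types (s : seq X) (w : nat -> X).

Lemma onth_mkseq w N i : onth (mkseq w N) i = if i < N then Some (w i) else None.
Proof.
rewrite onthE; case: ltnP => iN.
  by rewrite (nth_map (w 0)) ?size_mkseq // nth_mkseq.
by rewrite nth_default // size_map size_mkseq.
Qed.

Lemma is_period_mkseq w N p :
  is_period (mkseq w N) p <-> 0 < p < N /\ (forall i, i + p < N -> w i = w (i + p)).
Proof.
rewrite /is_period size_mkseq; split=> -[p_bound per]; split=> // i ipN;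
  move: (per i ipN); rewrite !onth_mkseq ipN (leq_ltn_trans (leq_addr p i) ipN).
  by case.
by move=> ->.
Qed.

Lemma min_period_le s p : is_period s p -> min_period s <= p.
Proof.
move=> per; rewrite /min_period leqNgt; apply/negP => /(before_find 0).
have [/andP[_ ps] _] := per.
by rewrite nth_iota // add0n; move/decPP.
Qed.

Lemma is_period_min_period s : finite_periodic s -> is_period s (min_period s).
Proof.
case=> p per; have [/andP[_ ps] _] := per.
set P := fun q => decP (is_period s q).
have has_per : has P (iota 0 (size s)).
  by apply/hasP; exists p; [rewrite mem_iota | apply/decPP].
have := has_find P (iota 0 (size s)); rewrite has_per size_iota => lt_find.
by have := nth_find 0 has_per; rewrite nth_iota // add0n => /decPP.
Qed.

Lemma size_fund_string s : finite_periodic s -> size (fund_string s) = min_period s.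
Proof.
move=> /is_period_min_period [/andP[_ ps] _].
by rewrite size_take ps.
Qed.

Lemma take_mkseq w m n : m <= n -> take m (mkseq w n) = mkseq w m.
Proof. by move=> mn; rewrite /mkseq -map_take take_iota (minn_idPl mn). Qed.

Lemma mkseqD w m n : mkseq w (m + n) = mkseq w m ++ mkseq (fun j => w (m + j)) n.
Proof.
by rewrite /mkseq iotaD map_cat add0n -[in iota m n](addn0 m) iotaDl -map_comp.
Qed.

Definition has_period w p := forall j, w (j + p) = w j.

Lemma has_periodM w m q : has_period w m -> has_period w (q * m).
Proof.
move=> per; elim: q => [|q IHq] j; first by rewrite mul0n addn0.
by rewrite mulSn addnA IHq per.
Qed.

Lemma has_period_is_period w p N :
  has_period w p -> 0 < p < N -> is_period (mkseq w N) p.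
Proof. by move=> per p_bound; apply/is_period_mkseq; split=> // i _; rewrite per. Qed.

(* Write j = r + q m with r < m; then r + p < N and the period p of the
   prefix applies at r. *)
Lemma has_period_of_prefix w m p N :
  has_period w m -> 0 < m -> p + m <= N -> is_period (mkseq w N) p ->
  has_period w p.
Proof.
move=> per_m m_gt0 pmN /is_period_mkseq [_ per_p] j.
have := ltn_pmod j m_gt0; rewrite (divn_eq j m) addnC.
set r := j %% m => r_lt; rewrite -addnA [_ * m + p]addnC addnA !(has_periodM _ per_m).
by symmetry; apply: per_p; lia.
Qed.

Lemma has_min_period_mkseq w m N :
  has_period w m -> 0 < m -> m.*2 <= N ->
  finite_periodic (mkseq w N) /\ has_period w (min_period (mkseq w N)).
Proof.
move=> per_m m_gt0 mN.
have per_mN : is_period (mkseq w N) m by apply: has_period_is_period => //; lia.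
have fp : finite_periodic (mkseq w N) by exists m.
split=> //; apply: (has_period_of_prefix per_m m_gt0 _ (is_period_min_period fp)).
by have := min_period_le per_mN; lia.
Qed.

Lemma min_period_mkseq_ext w N N' :
  finite_periodic (mkseq w N) -> has_period w (min_period (mkseq w N)) -> N <= N' ->
  min_period (mkseq w N') = min_period (mkseq w N).
Proof.
move=> fp per NN'; set p := min_period (mkseq w N).
have [/andP[p_gt0 pN] _] := is_period_min_period fp; rewrite size_mkseq in pN.
have per_N' : is_period (mkseq w N') p by apply: has_period_is_period => //; lia.
have le_p := min_period_le per_N'.
have /is_period_mkseq [/andP[q_gt0 _] per_q] := is_period_min_period (ex_intro _ p per_N').
apply/eqP; rewrite eqn_leq le_p /= min_period_le //.
by apply/is_period_mkseq; split=> [|i ?]; [lia | apply: per_q; lia].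
Qed.

Lemma eq_eventually_periodic (c d : nat -> X) :
  c =1 d -> eventually_periodic c -> eventually_periodic d.
Proof.
by move=> cd [r [m [m_gt0 per]]]; exists r, m; split=> // n rn; rewrite -!cd per.
Qed.

Lemma eventually_periodic_shift (c : nat -> X) (s : nat) :
  eventually_periodic (fun j => c (s + j)) <-> eventually_periodic c.
Proof.
split=> -[r [m [m_gt0 per]]].
  exists (s + r), m; split=> // n rn.
  by have := per (n - s) ltac:(lia); rewrite addnA subnKC //; lia.
by exists r, m; split=> // n rn; rewrite addnA per //; lia.
Qed.

End Periods.

Lemma nat_crossing (f : nat -> nat) t K :
  (forall u, f u.+1 <= (f u).+1) -> f 0 <= K < f t ->
  exists u, f u = K /\ f u.+1 = K.+1.
Proof.
move=> slow; elim: t => [|t IHt] /andP[f0K Kft]; first by lia.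
case: (ltnP K (f t)) => [Kft' | ftK]; first by apply: IHt; rewrite f0K.
by exists t; have := slow t; lia.
Qed.

(* [B_1 ++ ... ++ B_t] has [2 + 4 + ... + 2^t] terms. *)
Definition start (t : nat) : nat := 2 ^ t.+1 - 2.

Lemma startS t : start t.+1 = start t + 2 ^ t.+1.
Proof. by rewrite /start (expnS 2 t.+1) expnS; have := expn_gt0 2 t; lia. Qed.

Lemma leq_start t u : t <= u -> start t <= start u.
Proof.
move=> tu; have : 2 ^ t.+1 <= 2 ^ u.+1 by rewrite leq_exp2l.
rewrite /start; lia.
Qed.

Lemma start_gap t d : d <= start (t + d) - start t.
Proof.
elim: d => [|d IHd] //; rewrite addnS startS.
by have := leq_start (leq_addr d t); have := expn_gt0 2 (t + d).+1; lia.
Qed.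

Lemma tri_bin n : tri n = 'C(n.+1, 2).
Proof. by rewrite bin2 -divn2 mulnC. Qed.

Lemma triS n : tri n.+1 = tri n + n.+1.
Proof. by rewrite !tri_bin binS bin1. Qed.

(* The recursion inside [troot], with the bound kept apart from the counter. *)
Definition troot_below (K : nat) : nat -> nat :=
  fix f m := match m with 0 => 0 | m'.+1 => if tri m <= K then m else f m' end.

Lemma troot_below_eq K n d : tri n <= K < tri n.+1 -> troot_below K (n + d) = n.
Proof.
move=> /andP[nK Kn1]; elim: d => [|d IHd].
  by rewrite addn0; case: n nK Kn1 => //= n ->.
rewrite addnS /= IHd ifN // -ltnNge (leq_trans Kn1) // !tri_bin leq_bin2l //; lia.
Qed.

Lemma iseq_tri n i : i <= n -> iseq (tri n + i) = i.+1.
Proof.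
move=> ni; rewrite /iseq.
have n_le : n <= tri n by rewrite tri_bin; case: n {ni} => // n; rewrite binS bin1; lia.
have -> : troot (tri n + i) = troot_below (tri n + i) (n + (tri n + i - n)).
  by rewrite subnKC //; lia.
by rewrite troot_below_eq ?addKn ?addn1 // leq_addr triS /=; lia.
Qed.

Section Interleaving.
Variables (X : Type) (a : nat -> nat -> X).

Local Notation sb := (state_before a).
Local Notation b := (interleave_output a).

Definition up_on (T d : nat) : Prop := forall u, T < u <= T + d -> st_P (sb u).

Definition window (T d : nat) : seq X :=
  mkseq (fun j => b (start T + j)) (start (T + d) - start T).

Definition current_tail (T j : nat) : X :=
  a (cur_seq (sb T)) (st_pos (sb T) (cur_seq (sb T)) + j).

Lemma output_block t j : j < 2 ^ t.+1 -> b (start t + j) = current_tail t j.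
Proof.
move=> jt; rewrite /interleave_output.
have t2 : 2 <= 2 ^ t.+1 by rewrite expnS; have := expn_gt0 2 t; lia.
have -> : trunc_log 2 (start t + j + 2) = t.+1.
  by apply: trunc_log_eq => //; rewrite /start (expnS 2 t.+1); lia.
by rewrite /current_tail /start; congr (a _ (_ + _)); lia.
Qed.

Lemma block_output t : B a t.+1 = mkseq (fun j => b (start t + j)) (2 ^ t.+1).
Proof.
apply/eq_in_map => j; rewrite mem_iota add0n => /andP[_ jt].
by rewrite output_block.
Qed.

Lemma windowS T d : window T d.+1 = window T d ++ B a (T + d).+1.
Proof.
have sTd := leq_start (leq_addr d T).
rewrite /window addnS startS -addnBAC // mkseqD block_output; congr (_ ++ _).
by apply: eq_mkseq => j /=; rewrite addnA subnKC.
Qed.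

Lemma window1 T : window T 1 = B a T.+1.
Proof. by rewrite windowS addn0 /window addn0 subnn. Qed.

Lemma st_k_sbS t : st_k (sb t.+1) = st_k (sb t) + ~~ st_P (sb t.+1).
Proof.
by rewrite /= /step; case: (st_P (sb t)) => /=; case: decPP => _ /=;
  rewrite ?addn0 ?addn1.
Qed.

Lemma st_pos_sbS t i :
  st_pos (sb t.+1) i = st_pos (sb t) i + (i == cur_seq (sb t)) * 2 ^ t.+1.
Proof.
by rewrite /= /step; case: (st_P (sb t)) => /=; case: decPP => _ /=;
  case: eqP => [->|_]; rewrite ?mul1n ?mul0n ?addn0.
Qed.

Lemma leq_st_k t u : t <= u -> st_k (sb t) <= st_k (sb u).
Proof.
move=> /subnK <-; elim: (u - t) => // d IHd.
by rewrite addSn st_k_sbS; apply: leq_trans IHd (leq_addr _ _).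
Qed.

Lemma leq_st_pos t u i : t <= u -> st_pos (sb t) i <= st_pos (sb u) i.
Proof.
move=> /subnK <-; elim: (u - t) => // d IHd.
by rewrite addSn st_pos_sbS; apply: leq_trans IHd (leq_addr _ _).
Qed.

Lemma st_P_sbS t :
  st_P (sb t.+1) =
  if st_P (sb t) then
    decP (finite_periodic (st_acc (sb t) ++ B a t.+1) /\
          fund_string (st_acc (sb t) ++ B a t.+1) = st_S (sb t))
  else decP (finite_periodic (B a t.+1)).
Proof. by rewrite /= /step; case: (st_P (sb t)) => /=; case: decPP. Qed.

Lemma sbS_up t : st_P (sb t.+1) ->
  st_S (sb t.+1) = (if st_P (sb t) then st_S (sb t) else fund_string (B a t.+1)) /\
  st_acc (sb t.+1) = (if st_P (sb t) then st_acc (sb t) else [::]) ++ B a t.+1.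
Proof. by rewrite /= /step; case: (st_P (sb t)) => /=; case: decPP. Qed.

Lemma current_tail_step t :
  st_P (sb t.+1) -> current_tail t.+1 =1 (fun j => current_tail t (2 ^ t.+1 + j)).
Proof.
move=> up j; have cur : cur_seq (sb t.+1) = cur_seq (sb t).
  by rewrite /cur_seq st_k_sbS up addn0.
by rewrite /current_tail cur st_pos_sbS eqxx mul1n addnA.
Qed.

Lemma current_tail_run T d : up_on T d ->
  current_tail (T + d) =1 (fun j => current_tail T (start (T + d) - start T + j)).
Proof.
elim: d => [|d IHd] up j; first by rewrite addn0 subnn.
rewrite addnS current_tail_step; last by apply: up; lia.
rewrite IHd => [|u ?]; last by apply: up; lia.
by congr current_tail; have := leq_start (leq_addr d T); rewrite startS; lia.
Qed.

Lemma output_in_run T d : up_on T d ->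
  forall j, j < start (T + d.+1) - start T -> b (start T + j) = current_tail T j.
Proof.
elim: d => [|d IHd] up j.
  by rewrite addn1 startS addKn => /output_block.
have sTd := leq_start (leq_addr d.+1 T).
case: (ltnP j (start (T + d.+1) - start T)) => [j_lt _ | j_ge].
  by apply: IHd j_lt => u ?; apply: up; lia.
rewrite addnS startS => j_lt.
have -> : start T + j = start (T + d.+1) + (j - (start (T + d.+1) - start T)) by lia.
by rewrite output_block ?(current_tail_run up) ?subnKC //; lia.
Qed.

Lemma run_state T d : ~~ st_P (sb T) -> up_on T d.+1 ->
  [/\ st_S (sb (T + d.+1)) = fund_string (B a T.+1),
      st_acc (sb (T + d.+1)) = window T d.+1,
      finite_periodic (window T d.+1)
    & fund_string (window T d.+1) = fund_string (B a T.+1)].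
Proof.
move=> down; elim: d => [|d IHd] up.
  have up1 : st_P (sb T.+1) by apply: up; lia.
  rewrite addn1 window1; have [-> ->] := sbS_up up1; move: up1.
  by rewrite st_P_sbS (negbTE down) => /decPP.
have [eS eacc _ _] := IHd (fun u hu => up u ltac:(lia)).
have upd : st_P (sb (T + d.+1)) by apply: up; lia.
have upd1 : st_P (sb (T + d.+1).+1) by apply: up; lia.
rewrite [T + d.+2]addnS; have [-> ->] := sbS_up upd1; move: upd1.
by rewrite st_P_sbS upd eacc eS -windowS => /decPP [].
Qed.

Lemma output_periodic_of_run T :
  ~~ st_P (sb T) -> (forall u, T < u -> st_P (sb u)) -> eventually_periodic b.
Proof.
move=> down up; have run d := @run_state T d down (fun u hu => up u ltac:(lia)).
have [_ _ fpB _] := run 0; rewrite window1 in fpB.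
set p := min_period (B a T.+1).
have per d : is_period (window T d.+1) p.
  have [_ _ fp efund] := run d.
  rewrite /p -(size_fund_string fpB) -efund size_fund_string //.
  exact: is_period_min_period.
have [/andP[p_gt0 _] _] := per 0.
apply/(eventually_periodic_shift _ (start T)); exists 0, p; split=> // j _.
have /is_period_mkseq [_ per_j] := per (j + p).
by symmetry; apply: per_j; have := start_gap T (j + p).+1; lia.
Qed.

Lemma up_forever T w m :
  ~~ st_P (sb T) -> has_period w m -> 0 < m <= T ->
  (forall d j, up_on T d -> j < start (T + d.+1) - start T -> b (start T + j) = w j) ->
  forall u, T < u -> st_P (sb u).
Proof.
move=> down per_m /andP[m_gt0 mT] follows.
have [fpw per_p] : finite_periodic (mkseq w (2 ^ T.+1)) /\
                   has_period w (min_period (mkseq w (2 ^ T.+1))).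
  apply: has_min_period_mkseq per_m m_gt0 _.
  by have := ltn_expl T (isT : 1 < 2); rewrite expnS; lia.
have windowE d : up_on T d -> window T d.+1 = mkseq w (start (T + d.+1) - start T).
  by move=> up; apply/eq_in_map => j; rewrite mem_iota add0n => /andP[_]; apply: follows.
have B1 : B a T.+1 = mkseq w (2 ^ T.+1).
  by rewrite -window1 windowE // => [|u]; [rewrite addn1 startS addKn | lia].
suff up d : up_on T d by move=> u Tu; apply: (up u) => /=; lia.
elim: d => [u|d up u]; first by lia.
case: (ltnP u (T + d).+1) => [u_lt /andP[Tu _] | u_ge u_le]; first by apply: up; lia.
have -> : u = (T + d).+1 by lia.
rewrite st_P_sbS; case: d up {u u_ge u_le} => [|d] up.
  by rewrite addn0 (negbTE down) B1; apply/decPP.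
have [eS eacc _ _] := run_state down up.
have upd : st_P (sb (T + d.+1)) by apply: up; lia.
rewrite upd eacc eS -windowS (windowE d.+1 up) B1.
set p := min_period (mkseq w (2 ^ T.+1)); set N' := start _ - start T.
have [/andP[p_gt0 pN] _] := is_period_min_period fpw; rewrite size_mkseq in pN.
have NN' : 2 ^ T.+1 <= N'.
  by rewrite /N' -addSnnS; have := leq_start (leq_addr d.+1 T.+1); rewrite startS; lia.
apply/decPP; split; first by exists p; apply: has_period_is_period => //; lia.
by rewrite /fund_string (min_period_mkseq_ext fpw per_p NN') !take_mkseq //; lia.
Qed.

Lemma eventually_up_of_periodic_output :
  eventually_periodic b -> exists T, forall u, T < u -> st_P (sb u).
Proof.
case=> r [M [M_gt0 per]].
case: (classic (exists T, r + M <= T /\ ~~ st_P (sb T))) => [[T [rMT down]] | never_down].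
  exists T; apply: (@up_forever T (fun j => b (start T + j)) M) => //; last by lia.
  by move=> j; rewrite /= addnA per //; have := start_gap 0 T; rewrite add0n; lia.
exists (r + M) => u rMu; apply/negPn/negP => down.
by apply: never_down; exists u; split=> //; lia.
Qed.

Lemma output_tail T :
  (forall u, T < u -> st_P (sb u)) -> forall j, b (start T + j) = current_tail T j.
Proof.
move=> up j; apply: (@output_in_run T j) => [u ?|]; first by apply: up; lia.
by have := start_gap T j.+1; lia.
Qed.

Section Restarts.

Hypothesis down_often : forall N, exists t, N <= t /\ ~~ st_P (sb t).

Lemma k_unbounded K : exists t, K < st_k (sb t).
Proof.
elim: K => [|K [t Kt]]; first by exists 0.
have [[|u] [tu down]] := down_often t.+1; first by [].
exists u.+1; rewrite st_k_sbS down addn1 ltnS.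
exact: leq_trans Kt (leq_st_k _).
Qed.

Lemma k_hits K : 0 < K -> exists t, st_k (sb t) = K /\ ~~ st_P (sb t).
Proof.
case: K => [|[|K]] // _; first by exists 0.
have [t Kt] := k_unbounded K.+1.
have slow u : st_k (sb u.+1) <= (st_k (sb u)).+1.
  by rewrite st_k_sbS; case: (st_P _) => /=; lia.
have range : st_k (sb 0) <= K.+1 < st_k (sb t) by [].
have [u [ku ku1]] := nat_crossing slow range.
by exists u.+1; split=> //; move: ku1; rewrite st_k_sbS ku; case: (st_P _) => //=; lia.
Qed.

Lemma revisit i t : exists u, t < u /\ ~~ st_P (sb u) /\ cur_seq (sb u) = i.
Proof.
have big : st_k (sb t) < tri (st_k (sb t) + i.+1) by rewrite addnS triS; lia.
have [u [ku down]] := @k_hits (tri (st_k (sb t) + i.+1) + i) ltac:(lia).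
exists u; split; last by rewrite /cur_seq ku iseq_tri //; lia.
by rewrite ltnNge; apply/negP => /leq_st_k; rewrite ku; lia.
Qed.

End Restarts.

Lemma eventually_periodic_output_of_input i :
  eventually_periodic (a i) -> eventually_periodic b.
Proof.
case=> r [m [m_gt0 per]].
case: (classic (exists T, ~~ st_P (sb T) /\ forall u, T < u -> st_P (sb u)))
  => [[T [down up]] | never_locked]; first exact: output_periodic_of_run down up.
exfalso.
have down_often N : exists t, N <= t /\ ~~ st_P (sb t).
  elim: N => [|N [t [Nt down]]]; first by exists 0.
  apply: NNPP => never; apply: never_locked; exists t; split=> // u tu.
  by apply/negPn/negP => down_u; apply: never; exists u; split=> //; lia.
have [t1 [rmt1 [_ cur1]]] := revisit down_often i (r + m).
have [t2 [t12 [down2 cur2]]] := revisit down_often i t1.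
have late : t1 < st_pos (sb t2) i.
  have := leq_st_pos i t12; rewrite st_pos_sbS cur1 eqxx mul1n.
  by have := ltn_expl t1.+1 (isT : 1 < 2); lia.
apply: never_locked; exists t2; split=> //.
apply: (@up_forever t2 (current_tail t2) m down2) => [j | | d j up].
- by rewrite /current_tail cur2 addnA per //; lia.
- by lia.
- exact: output_in_run.
Qed.

End Interleaving.

Theorem theorem1 (X : Type) (a : nat -> nat -> X) :
  eventually_periodic (interleave_output a) <->
  exists i : nat, eventually_periodic (a i).
Proof.
split=> [per | [i /eventually_periodic_output_of_input //]].
have [T up] := eventually_up_of_periodic_output per.
set i := cur_seq (state_before a T); exists i.
apply/(eventually_periodic_shift _ (st_pos (state_before a T) i)).
apply: eq_eventually_periodic (output_tail up) _.
exact/eventually_periodic_shift.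
Qed.
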